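(* Let $\mathcal{X}$ be a Banach space with an unconditional basis $\mathcal{E}=\{e_n\}_{n\ge1}$, ordered by $\mathcal{E}$, and let $T$ be an injective lattice homomorphism on $\mathcal{X}$ with dense range. Then $T$ is a weighted permutation operator: there exist a permutation $\xi:\mathbb{N}\to\mathbb{N}$ and positive numbers $\{w_n\}_{n\ge1}$ with $Te_n=w_ne_{\xi(n)}$ for all $n$.
   Context: For $x=\sum_n x_ne_n\in\mathcal{X}$, $x\ge 0$ means all coordinates $x_n$ are real and $\ge0$. On vectors with real coordinates the lattice operations are coordinatewise: $x\vee y=\sum_n\max(x_n,y_n)e_n$, $x\wedge y=\sum_n\min(x_n,y_n)e_n$. An operator $T$ is positive if $Tx\ge0$ whenever $x\ge0$. A bounded linear operator $T$ is a lattice homomorphism if $T(x\vee y)=Tx\vee Ty$ for all $x,y$ (with real coordinates). *)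

From HB Require Import structures.
From mathcomp Require Import all_boot all_order all_algebra.
From mathcomp Require Import complex.
From mathcomp Require Import all_classical all_reals all_analysis.
Set Implicit Arguments. Unset Strict Implicit. Unset Printing Implicit Defensive.
Import Order.TTheory GRing.Theory Num.Theory.
Import numFieldNormedType.Exports.
Local Open Scope ring_scope.
Local Open Scope classical_set_scope.

Section Defs.
Variables (K : numFieldType) (X : normedModType K).

Definition has_expansion (e : nat -> X) (x : X) (a : nat -> K) : Prop :=
  (fun N : nat => \sum_(n < N) a n *: e n) @ \oo --> x.

Definition unconditional_basis (e : nat -> X) : Prop :=
  forall x : X,
    (exists! a : nat -> K, has_expansion e x a) /\
    (forall a, has_expansion e x a ->
       forall s : nat -> nat, bijective s -> has_expansion (e \o s) x (a \o s)).

Definition real_coords (e : nat -> X) (x : X) : Prop :=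
  forall a, has_expansion e x a -> forall n, a n \is Num.real.

Definition is_join (e : nat -> X) (x y z : X) : Prop :=
  real_coords e x /\ real_coords e y /\
  forall a b c, has_expansion e x a -> has_expansion e y b -> has_expansion e z c ->
    forall n, c n = Num.max (a n) (b n).

Definition lattice_hom (e : nat -> X) (T : X -> X) : Prop :=
  forall x y z, real_coords e x -> real_coords e y -> is_join e x y z ->
    is_join e (T x) (T y) (T z).
End Defs.

From HB Require Import structures.
From mathcomp Require Import all_boot all_order all_algebra.
From mathcomp Require Import complex.
From mathcomp Require Import all_classical all_reals all_analysis.
From mathcomp Require Import lra ring.
Import Order.TTheory GRing.Theory Num.Theory.
Import numFieldNormedType.Exports.
Local Open Scope classical_set_scope.
Local Open Scope complex_scope.
Local Open Scope ring_scope.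

(* The proof has an analytic half and a lattice-theoretic half.

   1. The coordinate functionals of a Schauder basis of a Banach space are
      continuous.  This is the classical Baire-category argument: the sets
      of vectors whose partial sums are bounded by k cover X, so the closure
      of one of them contains a ball; by successive halving approximations
      this yields a uniform bound |psum N x| <= M |x| on the partial sums,
      and hence |x_m| <= C_m |x| for every coordinate.  The scalar field is
      R[i], so the library's Baire theorem (stated over a realType) does not
      apply and a closed-cover version is proved here.
   2. Writing t k n for the n-th coordinate of T (e k), the lattice identities
      e k \/ 0 = e k and e k \/ e j = e k + e j (k != j) show that t k n >= 0
      and that T (e k), T (e j) have disjoint supports.  A linear relation
      between two coordinates that holds on every T (e k) holds on the dense
      range of T, hence everywhere, by continuity of the coordinates.  This
      forces each T (e k) (nonzero by injectivity) to be supported on a single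
      index xi k, and every index to be hit, so xi is a bijection. *)

(* Norms over the scalar field R[i] take values in R[i]; rnorm is their real
   part, a genuine real number, so that estimates can be closed by lra. *)
Section RealValuedNorm.
Context {R : realType}.

Definition rnorm {V : normedZmodType R[i]} (x : V) : R := complex.Re `|x|.

Section NormedZmod.
Context {V : normedZmodType R[i]}.
Implicit Types x y z : V.

Lemma rnormE x : `|x| = (rnorm x)%:C.
Proof. by rewrite /rnorm RRe_real // ger0_real. Qed.

Lemma rnorm_ge0 x : 0 <= rnorm x.
Proof. by rewrite -ler0c -rnormE. Qed.

Lemma rnormD x y : rnorm (x + y) <= rnorm x + rnorm y.
Proof. by rewrite -lecR rmorphD /= -!rnormE ler_normD. Qed.

Lemma rnormN x : rnorm (- x) = rnorm x.
Proof. by rewrite /rnorm normrN. Qed.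

Lemma rnormB x y : rnorm (x - y) = rnorm (y - x).
Proof. by rewrite /rnorm distrC. Qed.

Lemma rnorm0 : rnorm (0 : V) = 0.
Proof. by rewrite /rnorm normr0. Qed.

Lemma rnorm_eq0 x : (rnorm x == 0) = (x == 0).
Proof. by rewrite -[x == 0]normr_eq0 rnormE -(inj_eq (@complexI R)). Qed.

Lemma rnorm_gt0 x : (0 < rnorm x) = (x != 0).
Proof. by rewrite lt_def rnorm_eq0 rnorm_ge0 andbT. Qed.

Lemma rnorm_tri x y z : rnorm (x - z) <= rnorm (x - y) + rnorm (y - z).
Proof. by rewrite -[x - z](subrKA y) rnormD. Qed.
End NormedZmod.

Lemma rnormM (a b : R[i]) : rnorm (a * b) = rnorm a * rnorm b.
Proof. by apply: (@complexI R); rewrite rmorphM /= -!rnormE normrM. Qed.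

Lemma rnormZ (X : normedModType R[i]) (c : R[i]) (x : X) :
  rnorm (c *: x) = rnorm c * rnorm x.
Proof. by apply: (@complexI R); rewrite rmorphM /= -!rnormE normrZ. Qed.

Lemma rnormC (a : R) : rnorm a%:C = `|a|.
Proof. by rewrite /rnorm normc_def /= expr0n /= addr0 sqrtr_sqr. Qed.

Lemma rnormZr (X : normedModType R[i]) (a : R) (x : X) :
  rnorm (a%:C *: x) = `|a| * rnorm x.
Proof. by rewrite rnormZ rnormC. Qed.
End RealValuedNorm.

Section Convergence.
Context {R : realType} {X : normedModType R[i]}.
Implicit Types (f : nat -> X) (x y : X).

Lemma cvg_rnormP f y : f @ \oo --> y <->
  forall eps : R, 0 < eps -> exists N, forall n, (N <= n)%N -> rnorm (y - f n) < eps.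
Proof.
rewrite cvgrPdist_lt; split => H eps eps0.
- have := H eps%:C; rewrite ltcR => /(_ eps0) [N _ HN].
  by exists N => n /HN /=; rewrite rnormE ltcR.
- have epsR : eps \is Num.real by rewrite gtr0_real.
  move: eps0; rewrite -(RRe_real epsR) ltcR => eps0.
  have [N HN] := H _ eps0; exists N => // n /= /HN.
  by rewrite rnormE ltcR.
Qed.

Lemma cvg_eventually_eq f y N0 : (forall n, (N0 <= n)%N -> f n = y) -> f @ \oo --> y.
Proof. by move=> h; apply: cvg_near_cst; exists N0 => // n /h. Qed.

Lemma rnorm_lim_le f y x r N0 : f @ \oo --> y ->
  (forall n, (N0 <= n)%N -> rnorm (x - f n) <= r) -> rnorm (x - y) <= r.
Proof.
move=> /cvg_rnormP fy fr; apply/ler_addgt0Pr => eps eps0.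
have [N1 HN1] := fy _ eps0.
have h1 := fr (maxn N0 N1) (leq_maxl _ _).
have h2 := HN1 (maxn N0 N1) (leq_maxr _ _); rewrite rnormB in h2.
by apply: (le_trans (rnorm_tri x (f (maxn N0 N1)) y)); apply: lerD => //; apply: ltW.
Qed.

Lemma cvg_uniq f x y : f @ \oo --> x -> f @ \oo --> y -> x = y.
Proof. by move=> fx fy; apply: (@cvg_unique _ _ (f @ \oo)). Qed.

Lemma closure_rnorm (A : set X) x : closure A x ->
  forall eps, 0 < eps -> exists y, A y /\ rnorm (x - y) < eps.
Proof.
move=> Ax eps eps0.
have : nbhs x [set y | rnorm (x - y) < eps].
  apply/nbhs_normP; exists eps%:C; first by rewrite /= ltcR.
  by move=> y /=; rewrite rnormE ltcR.
by move=> /Ax [y [Ay xy]]; exists y.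
Qed.
End Convergence.

Lemma cauchy_rnorm {R : realType} {X : completeNormedModType R[i]} (u : nat -> X) :
  (forall eps, 0 < eps -> exists N, forall m n, (N <= m)%N -> (N <= n)%N ->
     rnorm (u m - u n) < eps) ->
  exists l : X, u @ \oo --> l.
Proof.
move=> ucauchy; suff: cvg (u @ \oo) by move=> ucvg; exists (lim (u @ \oo)).
apply/cauchy_cvgP; apply: cauchy_exP => eps eps0.
have epsR : eps \is Num.real by rewrite gtr0_real.
move: eps0; rewrite -(RRe_real epsR) ltcR => eps0.
have [N HN] := ucauchy _ eps0; exists (u N), N => // n /= Nn.
by rewrite -ball_normE /ball_ /= rnormE ltcR HN.
Qed.

Section RealSequences.
Context {R : realType}.
Implicit Types (u : nat -> R).

Lemma cvg_realP u l : u @ \oo --> l <->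
  forall eps : R, 0 < eps -> exists N, forall n, (N <= n)%N -> `|l - u n| < eps.
Proof.
rewrite cvgrPdist_lt; split => H eps eps0.
- by have [N _ HN] := H eps eps0; exists N => n /HN.
- by have [N HN] := H eps eps0; exists N.
Qed.

Lemma cauchy_real u :
  (forall eps, 0 < eps -> exists N, forall m n, (N <= m)%N -> (N <= n)%N ->
     `|u m - u n| < eps) ->
  exists l : R, u @ \oo --> l.
Proof.
move=> ucauchy; suff: cvg (u @ \oo) by move=> ucvg; exists (lim (u @ \oo)).
apply/cauchy_cvgP; apply: cauchy_exP => eps eps0.
have [N HN] := ucauchy _ eps0; exists (u N), N => // n /= Nn.
by rewrite -ball_normE /ball_ /= HN.
Qed.

Lemma inv_succ_lt (eps : R) : 0 < eps -> exists n : nat, n.+1%:R^-1 < eps.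
Proof.
move=> eps0; exists (Num.truncn eps^-1).
by rewrite -ltf_pV2 ?(posrE,divr_gt0)// ?invrK ?truncnS_gt // posrE invr_gt0.
Qed.

Lemma halvings_small (D : R) {eps : R} : 0 < eps ->
  exists J0, forall J, (J0 <= J)%N -> D / 2 ^+ J < eps.
Proof.
move=> eps0.
have half_lt1 : `|2^-1 : R| < 1 by rewrite gtr0_norm ?invf_lt1 ?ltr1n.
have /cvgr_dist_lt /(_ eps eps0) [J0 _ HJ0] := cvg_geometric D half_lt1.
exists J0 => J /HJ0 /=; rewrite sub0r normrN /geometric exprVn.
by move=> /(le_lt_trans (ler_norm _)).
Qed.
End RealSequences.

Section ComplexScalars.
Context {R : realType}.
Implicit Types (a b : R[i]) (s : nat -> R[i]).

Lemma rnorm_complex a : rnorm a = Num.sqrt (complex.Re a ^+ 2 + complex.Im a ^+ 2).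
Proof. by rewrite /rnorm normc_def. Qed.

Lemma Re_le_rnorm a : `|complex.Re a| <= rnorm a.
Proof.
by rewrite rnorm_complex -sqrtr_sqr ler_sqrt ?addr_ge0 ?sqr_ge0 // lerDl sqr_ge0.
Qed.

Lemma Im_le_rnorm a : `|complex.Im a| <= rnorm a.
Proof.
by rewrite rnorm_complex -sqrtr_sqr ler_sqrt ?addr_ge0 ?sqr_ge0 // lerDr sqr_ge0.
Qed.

Lemma rnorm_le_ReIm a : rnorm a <= `|complex.Re a| + `|complex.Im a|.
Proof.
rewrite rnorm_complex.
have hx := real_normK (num_real (complex.Re a)).
have hy := real_normK (num_real (complex.Im a)).
set x := complex.Re a in hx *; set y := complex.Im a in hy *.
rewrite -(ger0_norm (addr_ge0 (normr_ge0 x) (normr_ge0 y))) -sqrtr_sqr.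
rewrite ler_sqrt ?sqr_ge0 //.
by have := mulr_ge0 (normr_ge0 x) (normr_ge0 y); nra.
Qed.

Lemma ReB a b : complex.Re (a - b) = complex.Re a - complex.Re b.
Proof. by case: a => ? ?; case: b => ? ?. Qed.

Lemma ImB a b : complex.Im (a - b) = complex.Im a - complex.Im b.
Proof. by case: a => ? ?; case: b => ? ?. Qed.

Lemma cauchy_complex s :
  (forall eps, 0 < eps -> exists N, forall m n, (N <= m)%N -> (N <= n)%N ->
     rnorm (s m - s n) < eps) ->
  exists c, forall eps, 0 < eps -> exists N, forall n, (N <= n)%N -> rnorm (c - s n) < eps.
Proof.
move=> scauchy.
have [a Ha] : exists a : R, (fun n => complex.Re (s n)) @ \oo --> a.
  apply: cauchy_real => eps /scauchy [N HN]; exists N => m n Nm Nn.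
  by rewrite -ReB; apply: le_lt_trans (Re_le_rnorm _) (HN _ _ Nm Nn).
have [b Hb] : exists b : R, (fun n => complex.Im (s n)) @ \oo --> b.
  apply: cauchy_real => eps /scauchy [N HN]; exists N => m n Nm Nn.
  by rewrite -ImB; apply: le_lt_trans (Im_le_rnorm _) (HN _ _ Nm Nn).
exists (a +i* b)%C => eps eps0.
have eps20 : 0 < eps / 2 by rewrite divr_gt0.
have [Na HNa] := (cvg_realP _ _).1 Ha _ eps20.
have [Nb HNb] := (cvg_realP _ _).1 Hb _ eps20.
exists (maxn Na Nb) => n n_ge.
have ha := HNa n (leq_trans (leq_maxl _ _) n_ge).
have hb := HNb n (leq_trans (leq_maxr _ _) n_ge).
have ReIm_le := rnorm_le_ReIm ((a +i* b)%C - s n); rewrite ReB ImB /= in ReIm_le.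
by lra.
Qed.

Lemma cvg_scale_line {X : normedModType R[i]} (v w : X) s : v != 0 ->
  (fun n => s n *: v) @ \oo --> w -> exists c, w = c *: v.
Proof.
move=> v0 /cvg_rnormP sv_w; have v_gt0 : 0 < rnorm v by rewrite rnorm_gt0.
have [c sc] : exists c, forall eps, 0 < eps ->
    exists N, forall n, (N <= n)%N -> rnorm (c - s n) < eps.
  apply: cauchy_complex => eps eps0.
  have [N HN] := sv_w (eps * rnorm v / 2) (divr_gt0 (mulr_gt0 eps0 v_gt0) (ltr0Sn _ 1)).
  exists N => m n Nm Nn.
  have hm := HN _ Nm; have hn := HN _ Nn; rewrite rnormB in hm.
  have := rnorm_tri (s m *: v) w (s n *: v); rewrite -scalerBl rnormZ.
  by rewrite -(ltr_pM2r v_gt0); lra.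
exists c; apply: (cvg_uniq (fun n => s n *: v)); first exact/cvg_rnormP.
apply/cvg_rnormP => eps eps0.
have [N HN] := sc _ (divr_gt0 eps0 v_gt0); exists N => n /HN.
by rewrite -scalerBl rnormZ ltr_pdivlMr.
Qed.
End ComplexScalars.

Section Baire.
Context {R : realType} {X : completeNormedModType R[i]}.
Implicit Types (C : set X) (x y z : X).

Lemma closed_ball_avoiding C x r delta : closed C ->
  (forall x0 r0, 0 < r0 -> exists y, rnorm (x0 - y) < r0 /\ ~ C y) ->
  0 < r -> 0 < delta ->
  exists y r', [/\ 0 < r', r' <= delta &
    forall z, rnorm (y - z) <= r' -> rnorm (x - z) < r /\ ~ C z].
Proof.
move=> Ccl Cthin r0 delta0.
have [y [xy Cy]] := Cthin x (r / 2) (divr_gt0 r0 (ltr0Sn _ 1)).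
have /nbhs_normP [d d0 dsub] : nbhs y (~` C).
  by apply: open_nbhs_nbhs; split => //; exact: closed_openC.
have dR : d \is Num.real by rewrite gtr0_real.
have dRe0 : 0 < complex.Re d by have : 0 < d := d0; rewrite ltcE /= => /andP[].
pose r' := Num.min (complex.Re d / 2) (Num.min (r / 4) delta).
have r'_d : r' <= complex.Re d / 2 by rewrite /r' ge_min lexx.
have r'_r : r' <= r / 4 by rewrite /r' !ge_min lexx !orbT.
have r'_delta : r' <= delta by rewrite /r' !ge_min lexx !orbT.
exists y, r'; split => //; first by rewrite /r' !lt_min !divr_gt0.
move=> z yz; split.
  by have := rnorm_tri x y z; lra.
apply: dsub => /=; rewrite -(RRe_real dR) rnormE ltcR.
by apply: (le_lt_trans yz); lra.
Qed.

Lemma nested_closed_balls (a : nat -> X) (r : nat -> R) :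
  (forall k z, rnorm (a k.+1 - z) <= r k.+1 -> rnorm (a k - z) <= r k) ->
  (forall k, 0 <= r k) -> (forall k, r k.+1 <= k.+1%:R^-1) ->
  exists L, forall k, rnorm (a k - L) <= r k.
Proof.
move=> nested r_ge0 r_small.
have nestedn k m z : (k <= m)%N -> rnorm (a m - z) <= r m -> rnorm (a k - z) <= r k.
  elim: m => [|m IH]; first by rewrite leqn0 => /eqP ->.
  rewrite leq_eqVlt => /orP [/eqP -> //|km] am.
  by apply: IH => //; apply: nested.
have center k m : (k <= m)%N -> rnorm (a k - a m) <= r k.
  by move=> km; apply: (nestedn k m) => //; rewrite subrr rnorm0.
have [L aL] : exists L : X, a @ \oo --> L.
  apply: cauchy_rnorm => eps eps0.
  have [K HK] : exists K : nat, K.+1%:R^-1 < eps / 2.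
    by apply: inv_succ_lt; rewrite divr_gt0.
  exists K.+1 => m n Km Kn.
  have hm := center _ _ Km; have hn := center _ _ Kn; rewrite rnormB in hm.
  have := rnorm_tri (a m) (a K.+1) (a n); have := r_small K.
  by set q := K.+1%:R^-1 in HK *; lra.
by exists L => k; apply: (rnorm_lim_le _ _ _ _ k aL); exact: center.
Qed.

Lemma baire_closed_cover (C : nat -> set X) :
  (forall k, closed (C k)) -> (forall x, exists k, C k x) ->
  exists k x0 r, 0 < r /\ forall y, rnorm (x0 - y) < r -> C k y.
Proof.
move=> Ccl Ccov; apply: contrapT => noball.
have Cthin k x0 r0 : 0 < r0 -> exists y, rnorm (x0 - y) < r0 /\ ~ C k y.
  move=> r00; apply: contrapT => Cball; apply: noball; exists k, x0, r0.
  by split=> // y xy; apply: contrapT => Cy; apply: Cball; exists y.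
have step (p : nat * (X * R)) : exists q : X * R, 0 < p.2.2 ->
    [/\ 0 < q.2, q.2 <= p.1.+1%:R^-1 &
     forall z, rnorm (q.1 - z) <= q.2 -> rnorm (p.2.1 - z) < p.2.2 /\ ~ C p.1 z].
  case: p => [k [x r]] /=; have [r0|] := boolP (0 < r); last by exists (x, r).
  have inv_gt0 : 0 < k.+1%:R^-1 :> R by rewrite invr_gt0.
  have [y [r' []]] := closed_ball_avoiding _ x _ _ (Ccl k) (Cthin k) r0 inv_gt0.
  by exists (y, r').
have [g Hg] := choice step.
pose fix ball_seq n := if n is k.+1 then g (k, ball_seq k) else ((0 : X), (1 : R)).
have r_gt0 k : 0 < (ball_seq k).2.
  by elim: k => [|k IH] //=; have [] := Hg (k, ball_seq k) IH.
have [L aL] : exists L, forall k, rnorm ((ball_seq k).1 - L) <= (ball_seq k).2.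
  apply: nested_closed_balls => [k z /=|k|k /=]; last 2 first.
  - exact: ltW.
  - by have [] := Hg (k, ball_seq k) (r_gt0 k).
  by have [_ _ sub] := Hg (k, ball_seq k) (r_gt0 k) => /sub [/ltW].
have [k CkL] := Ccov L.
by have [_ _ sub] := Hg (k, ball_seq k) (r_gt0 k); have [] := sub L (aL k.+1).
Qed.
End Baire.

Lemma halving_telescope {R : realType} {V : normedZmodType R[i]} (u : nat -> V) (c : R) :
  (forall k, rnorm (u k.+1 - u k) <= c / 2 ^+ k) ->
  forall J K, (J <= K)%N -> rnorm (u K - u J) <= 2 * c / 2 ^+ J.
Proof.
move=> incr J K /subnKC <-; set d := (K - J)%N.
suff telescope : rnorm (u (J + d)%N - u J) <= 2 * c / 2 ^+ J - 2 * c / 2 ^+ (J + d).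
  apply: le_trans telescope _; rewrite gerBl divr_ge0 ?exprn_ge0 // mulr_ge0 //.
  by have := incr 0%N; rewrite expr0 divr1; apply: le_trans; exact: rnorm_ge0.
elim: d => [|d IH]; first by rewrite addn0 subrr rnorm0 subrr.
have := rnorm_tri (u (J + d.+1)%N) (u (J + d)%N) (u J); rewrite addnS.
have -> : 2 * c / 2 ^+ (J + d).+1 = c / 2 ^+ (J + d).
  by rewrite exprS; field; rewrite expf_neq0.
have := incr (J + d)%N; lra.
Qed.

Section Coordinates.
Context {R : realType} {X : completeNormedModType R[i]}.
Variable e : nat -> X.
Hypothesis expansion_unique : forall x, exists! a : nat -> R[i], has_expansion e x a.
Implicit Types (x y : X) (c : R[i]).

Lemma expansion_exists x : exists a, has_expansion e x a.
Proof. by have [a [xa _]] := expansion_unique x; exists a. Qed.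

Definition coord x : nat -> R[i] := projT1 (cid (expansion_exists x)).

Definition psum (N : nat) x : X := \sum_(n < N) coord x n *: e n.

Lemma coordP x : has_expansion e x (coord x).
Proof. exact: projT2 (cid _). Qed.

Lemma coord_uniq x a : has_expansion e x a -> coord x = a.
Proof.
by move=> xa; have [a0 [_ uniq]] := expansion_unique x; rewrite -(uniq _ xa) (uniq _ (coordP x)).
Qed.

Lemma psum_cvg x : (fun N => psum N x) @ \oo --> x.
Proof. exact: coordP. Qed.

Lemma coord_inj x y : coord x = coord y -> x = y.
Proof.
move=> xy; apply: (cvg_uniq _ _ _ (psum_cvg x)).
by rewrite (_ : (fun N => psum N x) = (fun N => psum N y)) ?funeqE /psum ?xy //; exact: psum_cvg.
Qed.

Lemma coordD x y : coord (x + y) = coord x \+ coord y.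
Proof.
apply: coord_uniq; rewrite /has_expansion.
under eq_fun do under eq_bigr do rewrite scalerDl; under eq_fun do rewrite big_split /=.
exact: cvgD (coordP x) (coordP y).
Qed.

Lemma coordZ c x : coord (c *: x) = fun n => c * coord x n.
Proof.
apply: coord_uniq; rewrite /has_expansion.
under eq_fun do under eq_bigr do rewrite -scalerA; under eq_fun do rewrite -scaler_sumr.
exact: cvgZl_tmp (coordP x).
Qed.

Lemma coord0 : coord 0 = fun _ => 0.
Proof.
apply: coord_uniq; apply: (cvg_eventually_eq _ _ 0%N) => n _.
by rewrite big1 // => i _; rewrite scale0r.
Qed.

Lemma coordB x y : coord (x - y) = fun n => coord x n - coord y n.
Proof. by rewrite coordD -scaleN1r coordZ funeqE => n /=; rewrite mulN1r. Qed.

Lemma coord_e m : coord (e m) = fun n => (n == m)%:R.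
Proof.
apply: coord_uniq; apply: (cvg_eventually_eq _ _ m.+1) => N mN.
rewrite (bigD1 (Ordinal mN)) //= eqxx scale1r big1 ?addr0 // => i im.
have /negbTE -> : (i : nat) != m by apply: contra im => /eqP im; apply/eqP/val_inj.
by rewrite scale0r.
Qed.

Lemma e_neq0 m : e m != 0.
Proof.
apply/eqP => em0; have := coord_e m; rewrite em0 coord0 funeqE => /(_ m).
by rewrite eqxx => /esym/eqP; rewrite oner_eq0.
Qed.

(* Each psum N is linear; declaring it so makes the library's linearity
   lemmas (linearB, linear0, ...) available for it. *)
Lemma psum_is_linear N : linear (psum N).
Proof.
move=> c x y; rewrite /psum coordD coordZ scaler_sumr -big_split /=.
by apply: eq_bigr => n _; rewrite scalerDl scalerA.
Qed.

HB.instance Definition _ N := GRing.isLinear.Build R[i] X X *:%R (psum N) (psum_is_linear N).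

Lemma psum_succ N x : psum N.+1 x - psum N x = coord x N *: e N.
Proof. by rewrite /psum big_ord_recr /= [X in X - _]addrC addrK. Qed.

Lemma psum0n x : psum 0 x = 0.
Proof. by rewrite /psum big_ord0. Qed.

Definition psums_bounded (M : R) x := forall N, rnorm (psum N x) <= M.

Lemma psums_bounded_cover x : exists k : nat, psums_bounded k%:R x.
Proof.
have [N0 HN0] := (cvg_rnormP _ _).1 (psum_cvg x) 1 ltr01.
pose B := \sum_(i < N0) rnorm (psum i x) + (rnorm x + 1).
have B0 : 0 <= \sum_(i < N0) rnorm (psum i x) by apply: sumr_ge0 => i _; exact: rnorm_ge0.
exists (Num.truncn B).+1 => N; apply: le_trans (ltW (truncnS_gt B)).
have [N0N|NN0] := leqP N0 N.
  have := HN0 N N0N; have := rnorm_tri (psum N x) x 0; rewrite !subr0 rnormB /B.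
  by lra.
have : rnorm (psum N x) <= \sum_(i < N0) rnorm (psum i x).
  rewrite (bigD1 (Ordinal NN0)) //= ler_wpDr //.
  by apply: sumr_ge0 => i _; exact: rnorm_ge0.
by have := rnorm_ge0 x; rewrite /B; lra.
Qed.

Lemma psums_bounded_scaled_diff (a M : R) u v : 0 <= a ->
  psums_bounded M u -> psums_bounded M v -> psums_bounded (a * (2 * M)) (a%:C *: (u - v)).
Proof.
move=> a0 Mu Mv N; rewrite linearZ linearB /= rnormZr ger0_norm // ler_wpM2l //.
by have := rnormD (psum N u) (- psum N v); rewrite rnormN; have := Mu N; have := Mv N; lra.
Qed.

(* If the closure of the vectors with partial sums bounded by k contains a
   ball of radius r, then every z is approximated by vectors whose partial
   sums are bounded by (4k/r) |z|: rescale z into the ball around its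
   center x0 and take the difference of two approximants. *)
Lemma psums_approx_from_ball (k : nat) x0 (r : R) : 0 < r ->
  (forall y, rnorm (x0 - y) < r -> closure [set y | psums_bounded k%:R y] y) ->
  forall z eps, 0 < eps ->
  exists y, rnorm (z - y) < eps /\ psums_bounded (4 * k%:R / r * rnorm z) y.
Proof.
move=> r0 ball_sub z eps eps0; have [->|z0] := eqVneq z 0.
  by exists 0; rewrite subrr rnorm0; split => // N; rewrite linear0 rnorm0 mulr0.
have z_gt0 : 0 < rnorm z by rewrite rnorm_gt0.
pose t := r / (2 * rnorm z); have t0 : 0 < t by rewrite divr_gt0 // mulr_gt0.
pose u := x0 + t%:C *: z.
have u_in : closure [set y | psums_bounded k%:R y] u.
  apply: ball_sub; rewrite /u opprD addrA subrr add0r rnormN rnormZr gtr0_norm //.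
  have -> : t * rnorm z = r / 2 by rewrite /t; field; rewrite gt_eqF.
  by lra.
have x0_in : closure [set y | psums_bounded k%:R y] x0.
  by apply: ball_sub; rewrite subrr rnorm0.
have d0 : 0 < t * eps / 2 by rewrite divr_gt0 // mulr_gt0.
have [u' [Fu' uu']] := closure_rnorm _ _ u_in _ d0.
have [v' [Fv' xv']] := closure_rnorm _ _ x0_in _ d0.
exists (t^-1%:C *: (u' - v')); split.
  have scale_back : t%:C *: (t^-1%:C *: (u' - v')) = u' - v'.
    by rewrite scalerA -rmorphM mulfV ?gt_eqF // scale1r.
  have key : t%:C *: (z - t^-1%:C *: (u' - v')) = (u - u') - (x0 - v').
    by rewrite scalerBr scale_back /u [x0 + _]addrC addrAC addrKA opprK opprB addrA addrAC.
  rewrite -(ltr_pM2l t0) -[t in t * rnorm _](@gtr0_norm _ t) // -rnormZr key.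
  have := rnormD (u - u') (- (x0 - v')); rewrite rnormN.
  have half_eps : t * eps / 2 + t * eps / 2 = t * eps by rewrite -splitr.
  by lra.
have tinv0 : 0 <= t^-1 by rewrite invr_ge0 ltW.
have := psums_bounded_scaled_diff _ _ _ _ tinv0 Fu' Fv'.
suff -> : t^-1 * (2 * k%:R) = 4 * k%:R / r * rnorm z by [].
by rewrite /t invf_div; field; rewrite gt_eqF.
Qed.

Lemma psums_approx : exists M : R, 0 <= M /\ forall z eps, 0 < eps ->
  exists y, rnorm (z - y) < eps /\ psums_bounded (M * rnorm z) y.
Proof.
have closure_cover x : exists k, closure [set y | psums_bounded k%:R y] x.
  by have [k xk] := psums_bounded_cover x; exists k; exact: subset_closure.
have [k [x0 [r [r0 ball_sub]]]] := baire_closed_cover _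
  (fun k => @closed_closure _ [set y | psums_bounded k%:R y]) closure_cover.
exists (4 * k%:R / r); split; first by rewrite divr_ge0 ?mulr_ge0 // ltW.
exact: psums_approx_from_ball _ _ _ r0 ball_sub.
Qed.

(* Passing partial sums to a limit without knowing that psum N is
   continuous: if Q J -> x and psum N (Q J) is Cauchy in J with a rate b J
   independent of N, then psum N x = lim_J psum N (Q J).  The limits are
   again the partial sums of some expansion (each increment lies on the
   closed line through e N), which by uniqueness is the expansion of x. *)
Section PartialSumsOfLimits.
Variables (Q : nat -> X) (x : X) (b : nat -> R).
Hypothesis Qx : Q @ \oo --> x.
Hypothesis b_small : forall eps, 0 < eps -> exists J0, forall J, (J0 <= J)%N -> b J < eps.
Hypothesis psumQ_cauchy :
  forall J K N, (J <= K)%N -> rnorm (psum N (Q K) - psum N (Q J)) <= b J.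

Let P N := lim ((fun J => psum N (Q J)) @ \oo).

Lemma psumQ_cvg N : (fun J => psum N (Q J)) @ \oo --> P N.
Proof.
suff [l Hl] : exists l : X, (fun J => psum N (Q J)) @ \oo --> l by exact: cvgP Hl.
apply: cauchy_rnorm => eps eps0; have [J0 HJ0] := b_small _ (divr_gt0 eps0 (ltr0Sn _ 1)).
exists J0 => m n J0m J0n.
have hm := psumQ_cauchy _ _ N J0m; have hn := psumQ_cauchy _ _ N J0n; rewrite rnormB in hn.
by have := rnorm_tri (psum N (Q m)) (psum N (Q J0)) (psum N (Q n)); have := HJ0 J0 (leqnn _); lra.
Qed.

Lemma P_near N J : rnorm (P N - psum N (Q J)) <= b J.
Proof.
rewrite rnormB; apply: (rnorm_lim_le _ _ _ _ J (psumQ_cvg N)) => K JK.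
by rewrite rnormB; exact: psumQ_cauchy.
Qed.

Lemma P_expansion : exists a : nat -> R[i], forall N, P N = \sum_(n < N) a n *: e n.
Proof.
have P0 : P 0 = 0.
  apply: (cvg_uniq _ _ _ (psumQ_cvg 0)); apply: (cvg_eventually_eq _ _ 0%N) => J _.
  exact: psum0n.
have step N : exists c, P N.+1 - P N = c *: e N.
  apply: (cvg_scale_line _ _ (fun J => coord (Q J) N) (e_neq0 N)).
  have -> : (fun J => coord (Q J) N *: e N) =
      (fun J => psum N.+1 (Q J)) - (fun J => psum N (Q J)).
    by rewrite funeqE => J; rewrite -psum_succ.
  exact: cvgB (psumQ_cvg N.+1) (psumQ_cvg N).
have [c Hc] := choice step; exists c.
elim => [|N IH]; first by rewrite P0 big_ord0.
by rewrite big_ord_recr /= -IH -Hc addrC subrK.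
Qed.

Lemma psum_limit N : psum N x = P N.
Proof.
have [a Pa] := P_expansion.
suff xa : has_expansion e x a by rewrite /psum (coord_uniq _ _ xa) Pa.
rewrite /has_expansion -(funext Pa); apply/cvg_rnormP => eps eps0.
have eps3 : 0 < eps / 3 by rewrite divr_gt0.
have [J0 HJ0] := b_small _ eps3; have [J1 HJ1] := (cvg_rnormP _ _).1 Qx _ eps3.
pose J := maxn J0 J1.
have bJ := HJ0 J (leq_maxl _ _); have QJ := HJ1 J (leq_maxr _ _).
have [N1 HN1] := (cvg_rnormP _ _).1 (psum_cvg (Q J)) _ eps3.
exists N1 => N' N1N'; have := HN1 N' N1N'; have := P_near N' J; rewrite rnormB.
have := rnorm_tri x (Q J) (P N'); have := rnorm_tri (Q J) (psum N' (Q J)) (P N').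
by lra.
Qed.

Lemma psum_limit_bound N J : rnorm (psum N x - psum N (Q J)) <= b J.
Proof. by rewrite psum_limit; exact: P_near. Qed.
End PartialSumsOfLimits.

Lemma halving_decomposition M x : 0 <= M ->
  (forall z eps, 0 < eps -> exists y, rnorm (z - y) < eps /\ psums_bounded (M * rnorm z) y) ->
  exists z : nat -> X, z 0%N = x /\ forall j,
    rnorm (z j) <= rnorm x / 2 ^+ j /\ psums_bounded (M * (rnorm x / 2 ^+ j)) (z j - z j.+1).
Proof.
move=> M0 approx; have [->|x0] := eqVneq x 0.
  exists (fun=> 0); split => // j; rewrite subr0 rnorm0 mul0r mulr0; split => // N.
  by rewrite linear0 rnorm0.
pose h (j : nat) := rnorm x / 2 ^+ j.
have h_gt0 j : 0 < h j by rewrite divr_gt0 ?exprn_gt0 // rnorm_gt0.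
have pick (p : X * R) : exists y : X, 0 < p.2 ->
    rnorm (p.1 - y) < p.2 /\ psums_bounded (M * rnorm p.1) y.
  case: p => z eps /=; have [eps0|] := boolP (0 < eps); last by exists 0.
  by have [y ?] := approx z eps eps0; exists y.
have [g Hg] := choice pick.
pose fix z j := if j is i.+1 then z i - g (z i, h i.+1) else x.
have z_small j : rnorm (z j) <= h j.
  case: j => [|j]; first by rewrite /h expr0 divr1.
  by have [/ltW] := Hg (z j, h j.+1) (h_gt0 _).
exists z; split => // j; split; first exact: z_small.
rewrite /= opprB addrC subrK => N; have [_ /(_ N) gb] := Hg (z j, h j.+1) (h_gt0 _).
by apply: le_trans gb _; exact: (ler_wpM2l M0 (z_small j)).
Qed.

Lemma psum_uniform_bound : exists M : R, 0 <= M /\ forall x N, rnorm (psum N x) <= M * rnorm x.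
Proof.
have [M [M0 approx]] := psums_approx.
exists (2 * M); split => [|x N]; first by rewrite mulr_ge0.
have [z [z0 zj]] := halving_decomposition _ x M0 approx.
pose Q J := x - z J.
have Qx : Q @ \oo --> x.
  apply/cvg_rnormP => eps eps0; have [J0 HJ0] := halvings_small (rnorm x) eps0.
  exists J0 => J J0J; rewrite /Q opprB addrC subrK.
  by have [zJ _] := zj J; apply: le_lt_trans zJ (HJ0 J J0J).
pose b J := 2 * (M * rnorm x) / 2 ^+ J.
have b_small eps : 0 < eps -> exists J0, forall J, (J0 <= J)%N -> b J < eps.
  by move=> eps0; have [J0 HJ0] := halvings_small (2 * (M * rnorm x)) eps0; exists J0.
have psumQ_cauchy J K N' : (J <= K)%N -> rnorm (psum N' (Q K) - psum N' (Q J)) <= b J.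
  apply: (halving_telescope (fun K => psum N' (Q K))) => k /=.
  have Qincr : Q k.+1 - Q k = z k - z k.+1 by rewrite /Q opprB addrC addrA subrK.
  rewrite -linearB Qincr -mulrA.
  by have [_ /(_ N')] := zj k.
have := psum_limit_bound _ _ _ Qx b_small psumQ_cauchy N 0%N.
by rewrite /Q z0 subrr linear0 subr0 /b expr0 divr1 mulrA.
Qed.

Lemma coord_bound m : exists C : R, forall x, rnorm (coord x m) <= C * rnorm x.
Proof.
have [M [M0 psumM]] := psum_uniform_bound.
have em_gt0 : 0 < rnorm (e m) by rewrite rnorm_gt0 e_neq0.
exists (2 * M / rnorm (e m)) => x.
rewrite mulrAC ler_pdivlMr // -rnormZ -psum_succ.
have := rnormD (psum m.+1 x) (- psum m x); rewrite rnormN.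
by have := psumM x m.+1; have := psumM x m; lra.
Qed.
End Coordinates.

Lemma bounded_functional_vanish {R : realType} {X : normedModType R[i]}
    (phi : X -> R[i]) (K : R) (A : set X) y : 0 <= K ->
  (forall u v, phi (u - v) = phi u - phi v) -> (forall u, rnorm (phi u) <= K * rnorm u) ->
  (forall u, A u -> phi u = 0) ->
  (forall eps, 0 < eps -> exists u, A u /\ rnorm (y - u) < eps) -> phi y = 0.
Proof.
move=> K0 phiB phiK phiA yA; apply/eqP; rewrite -rnorm_eq0 eq_le rnorm_ge0 andbT.
apply/ler_addgt0Pr => eps eps0; rewrite add0r.
have K1 : 0 < K + 1 by rewrite ltr_wpDl.
have [u [Au yu]] := yA _ (divr_gt0 eps0 K1).
have -> : phi y = phi (y - u) by rewrite phiB (phiA u Au) subr0.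
apply: (le_trans (phiK _)); apply: (@le_trans _ _ ((K + 1) * rnorm (y - u))).
  by rewrite ler_wpM2r ?rnorm_ge0 // lerDl.
by rewrite -ler_pdivlMl // mulrC; exact: ltW.
Qed.

Lemma max_ge0 {D : numDomainType} (x : D) : x \is Num.real -> x = Num.max x 0 -> 0 <= x.
Proof.
move=> xr; rewrite /Num.max /Order.max; case: ifP => [x0 ->//|x0 _].
by move: xr; rewrite realE => /orP[//|]; rewrite le_eqVlt x0 orbF => /eqP ->.
Qed.

Lemma max_eq_add {D : numDomainType} (a b : D) : 0 <= a -> 0 <= b ->
  a + b = Num.max a b -> a = 0 \/ b = 0.
Proof.
move=> a0 b0; rewrite /Num.max /Order.max; case: ifP => _ h.
  by left; apply: (@addIr _ b); rewrite h add0r.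
by right; apply: (@addrI _ a); rewrite h addr0.
Qed.

Section LatticeHomomorphism.
Context {R : realType} {X : completeNormedModType R[i]}.
Variables (e : nat -> X) (T : {linear X -> X}).
Hypothesis basis : unconditional_basis e.
Hypothesis T_cont : continuous T.
Hypothesis T_lattice : lattice_hom e T.
Hypothesis T_inj : injective T.
Hypothesis T_dense : closure (range T) = setT.

Let expansion_unique x : exists! a, has_expansion e x a := (basis x).1.
Local Notation coord := (coord e expansion_unique).
Local Notation coord_uniq := (coord_uniq e expansion_unique).

Local Notation t k n := (coord (T (e k)) n).

(* Since T has dense range and the coordinate functionals are continuous,
   a linear relation between two coordinates holding on every T (e k)
   holds on every vector. *)
Lemma coord_relation (a b : R[i]) p q :
  (forall k, a * t k p + b * t k q = 0) -> forall y, a * coord y p + b * coord y q = 0.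
Proof.
move=> rel_e.
pose phi y := a * coord y p + b * coord y q.
have phiB u v : phi (u - v) = phi u - phi v by rewrite /phi coordB; ring.
have [Cp Cp_bound] := coord_bound e expansion_unique p.
have [Cq Cq_bound] := coord_bound e expansion_unique q.
pose K := rnorm a * `|Cp| + rnorm b * `|Cq|.
have K0 : 0 <= K by rewrite addr_ge0 // mulr_ge0 ?rnorm_ge0.
have phiK u : rnorm (phi u) <= K * rnorm u.
  apply: le_trans (rnormD _ _) _; rewrite !rnormM mulrDl.
  by apply: lerD; rewrite -mulrA ler_wpM2l ?rnorm_ge0 //;
    [apply: le_trans (Cp_bound u) _ | apply: le_trans (Cq_bound u) _];
    rewrite ler_wpM2r ?rnorm_ge0 ?ler_norm.
have phi_sum N (f : nat -> X) (c : nat -> R[i]) :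
    phi (\sum_(n < N) c n *: f n) = \sum_(n < N) c n * phi (f n).
  elim: N => [|N IH]; first by rewrite !big_ord0 /phi coord0 !mulr0 addr0.
  by rewrite !big_ord_recr /= -IH /phi coordD !coordZ /=; ring.
have phi_T x : phi (T x) = 0.
  apply: (bounded_functional_vanish _ _ (fun u => exists N, u = T (psum e expansion_unique N x))
    _ K0 phiB phiK).
    move=> u [N ->]; rewrite /psum linear_sum.
    under eq_bigr do rewrite linearZZ; rewrite (phi_sum N (T \o e)) big1 // => n _.
    by rewrite /phi rel_e mulr0.
  move=> eps eps0.
  have Tpsum : (T \o (fun N => psum e expansion_unique N x)) @ \oo --> T x.
    by apply: continuous_cvg; [exact: T_cont | exact: psum_cvg].
  have [N HN] := (cvg_rnormP _ _).1 Tpsum _ eps0.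
  by exists (T (psum e expansion_unique N x)); split; [exists N | exact: HN].
move=> y; apply: (bounded_functional_vanish _ _ (range T) _ K0 phiB phiK).
  by move=> u [x _ <-]; exact: phi_T.
by apply: closure_rnorm; rewrite T_dense.
Qed.

Lemma real_coords_e k : real_coords e (e k).
Proof. by move=> a /coord_uniq <- n; rewrite coord_e; exact: realn. Qed.

Lemma real_coords_0 : real_coords e 0.
Proof. by move=> a /coord_uniq <- n; rewrite coord0; exact: real0. Qed.

Lemma T_join_coord x y z n : real_coords e x -> real_coords e y -> is_join e x y z ->
  coord (T x) n \is Num.real /\ coord (T z) n = Num.max (coord (T x) n) (coord (T y) n).
Proof.
move=> xr yr xyz; have [Txr [_ Tjoin]] := T_lattice _ _ _ xr yr xyz.
by split; [exact: Txr (coordP _ _ _) n | exact: Tjoin (coordP _ _ _) (coordP _ _ _) (coordP _ _ _) n].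
Qed.

(* T is positive: e k = e k \/ 0, so T (e k) = T (e k) \/ 0 >= 0. *)
Lemma T_e_ge0 k n : 0 <= t k n.
Proof.
have join : is_join e (e k) 0 (e k).
  split; [exact: real_coords_e | split; [exact: real_coords_0 |]].
  move=> a b c /coord_uniq <- /coord_uniq <- /coord_uniq <- m.
  rewrite coord_e coord0 /Num.max /Order.max.
  by case: (m == k); rewrite ?ltr10 ?ltxx.
have [tr tmax] := T_join_coord _ _ _ n (real_coords_e k) real_coords_0 join.
by apply: max_ge0 => //; rewrite [LHS]tmax linear0 coord0.
Qed.

(* T maps disjoint vectors to disjoint vectors: e k + e j = e k \/ e j. *)
Lemma T_e_disjoint k j n : k != j -> t k n = 0 \/ t j n = 0.
Proof.
move=> kj; have join : is_join e (e k) (e j) (e k + e j).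
  split; [exact: real_coords_e | split; [exact: real_coords_e |]].
  move=> a b c /coord_uniq <- /coord_uniq <- /coord_uniq <- m.
  rewrite coordD !coord_e /Num.max /Order.max /=; have [->|mk] := eqVneq m k.
    by rewrite (negbTE kj) /= addr0 ltr10.
  by case: (m == j); rewrite /= ?add0r ?addr0 ?ltr01 ?ltxx.
have [_ tmax] := T_join_coord _ _ _ n (real_coords_e k) (real_coords_e j) join.
by apply: max_eq_add; rewrite ?T_e_ge0 // -tmax linearD coordD.
Qed.

Lemma T_e_support k : exists n, t k n != 0.
Proof.
apply: contrapT => t0; have: coord (T (e k)) = coord 0.
  rewrite coord0 funeqE => n; apply/eqP/negPn/negP => tn.
  by apply: t0; exists n.
by move/coord_inj; rewrite -(linear0 T) => /T_inj /eqP; apply/negP/e_neq0.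
Qed.

(* T (e k) is supported on a single coordinate: two coordinates p != q in
   its support would give the relation t k q * y_p - t k p * y_q = 0 for all
   y, which fails at y = e q. *)
Lemma T_e_single k p q : t k p != 0 -> t k q != 0 -> p = q.
Proof.
move=> tp tq; apply: contrapT => /eqP pq.
have rel j : t k q * t j p + - t k p * t j q = 0.
  have [->|jk] := eqVneq j k; first by ring.
  have [tjp|tkp] := T_e_disjoint _ _ p jk; last by move: tp; rewrite tkp eqxx.
  have [tjq|tkq] := T_e_disjoint _ _ q jk; last by move: tq; rewrite tkq eqxx.
  by rewrite tjp tjq; ring.
move: (coord_relation _ _ _ _ rel (e q)); rewrite !coord_e /= eqxx (negbTE pq) mulr0 add0r mulr1.
by move/eqP; rewrite oppr_eq0 (negbTE tp).
Qed.

(* Every coordinate n is hit by some T (e k): otherwise y_n = 0 for all y. *)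
Lemma T_e_cover n : exists k, t k n != 0.
Proof.
apply: contrapT => not_hit.
have rel k : 1 * t k n + 0 * t k n = 0.
  rewrite mul0r addr0 mul1r; apply/eqP/negPn/negP => tkn.
  by apply: not_hit; exists k.
move: (coord_relation _ _ _ _ rel (e n)); rewrite coord_e /= eqxx mul0r addr0 mulr1.
by move/eqP; rewrite oner_eq0.
Qed.

Lemma T_support_permutation : exists xi : nat -> nat,
  bijective xi /\ forall k n, (t k n != 0) = (n == xi k).
Proof.
have [xi xi_supp] := choice T_e_support; have [g g_supp] := choice T_e_cover.
have supp k n : (t k n != 0) = (n == xi k).
  apply/idP/eqP => [tkn|->]; [exact: T_e_single _ _ _ tkn (xi_supp k) | exact: xi_supp].
exists xi; split => //; exists g => [k|n]; last by apply/esym/eqP; rewrite -supp.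
apply: contrapT => /eqP gk; have [/eqP|/eqP] := T_e_disjoint _ _ (xi k) gk.
  by rewrite (negbTE (g_supp (xi k))).
by rewrite (negbTE (xi_supp k)).
Qed.

Lemma T_e_multiple k n : t k n != 0 -> exists w : R, 0 < w /\ T (e k) = w%:C *: e n.
Proof.
move=> tkn; have tkn_gt0 : 0 < t k n by rewrite lt_def tkn T_e_ge0.
exists (complex.Re (t k n)); split; first by move: tkn_gt0; rewrite ltcE => /andP[].
rewrite (RRe_real (gtr0_real tkn_gt0)); apply: (coord_inj e expansion_unique).
rewrite coordZ coord_e funeqE => m /=; have [->|mn] := eqVneq m n; first by rewrite mulr1.
rewrite mulr0; apply/eqP/negPn/negP => tkm.
by move: mn; rewrite (T_e_single _ _ _ tkm tkn) eqxx.
Qed.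
End LatticeHomomorphism.

Theorem proposition3p2 (R : realType) (X : completeNormedModType R[i])
    (e : nat -> X) (T : {linear X -> X}) :
  unconditional_basis e ->
  continuous T ->
  lattice_hom e T ->
  injective T ->
  closure (range T) = setT ->
  exists xi : nat -> nat, bijective xi /\
    exists w : nat -> R, (forall n, 0 < w n) /\
      forall n, T (e n) = ((w n)%:C)%C *: e (xi n).
Proof.
move=> basis T_cont T_lattice T_inj T_dense.
have [xi [xi_bij xi_supp]] := T_support_permutation _ _ basis T_cont T_lattice T_inj T_dense.
have T_e k : exists w : R, 0 < w /\ T (e k) = w%:C *: e (xi k).
  by apply: (T_e_multiple _ _ basis T_cont T_lattice T_dense); rewrite xi_supp.
have [w w_spec] := choice T_e.
by exists xi; split => //; exists w; split => n; have [] := w_spec n.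
Qed.
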